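(* For all integers $n,r\ge 1$, the diameter of $G(n,r)$ equals $(n-1)r$.
   Context: For integers $n,r\ge 1$, $G(n,r)$ is the simple undirected graph whose vertices are the $n\times n$ matrices with non-negative integer entries all of whose row sums and column sums equal $r$. Let $e_{ij}$ be the $n\times n$ matrix with a $1$ in position $(i,j)$ and $0$ elsewhere, and let $\mathcal{B}=\{\pm(e_{ij}+e_{kl}-e_{il}-e_{kj}) : 1\le i<k\le n,\ 1\le j<l\le n\}$. Two vertices $u,v$ are adjacent iff $u-v\in\mathcal{B}$. The diameter is the maximum over pairs of vertices of the shortest-path distance. *)

From HB Require Import structures.
From mathcomp Require Import all_boot all_order all_algebra.
Set Implicit Arguments. Unset Strict Implicit. Unset Printing Implicit Defensive.
Import GRing.Theory Num.Theory.

Definition is_vertex (n r : nat) (A : 'M[nat]_n) : Prop :=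
  (forall i : 'I_n, (\sum_(j < n) A i j)%N = r) /\
  (forall j : 'I_n, (\sum_(i < n) A i j)%N = r).

Definition mx_int (n : nat) (A : 'M[nat]_n) : 'M[int]_n :=
  \matrix_(i, j) (Posz (A i j)).

Definition basic_move (n : nat) (i j k l : 'I_n) : 'M[int]_n :=
  (delta_mx i j + delta_mx k l - delta_mx i l - delta_mx k j)%R.

Definition adj (n : nat) (u v : 'M[nat]_n) : Prop :=
  exists (i k j l : 'I_n), (i < k)%N /\ (j < l)%N /\
    ((mx_int u - mx_int v = basic_move i j k l)%R \/
     (mx_int u - mx_int v = - basic_move i j k l)%R).

Inductive walk (n r : nat) : nat -> 'M[nat]_n -> 'M[nat]_n -> Prop :=
| walk0 (u : 'M[nat]_n) : @is_vertex n r u -> @walk n r 0%N u u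
| walkS (d : nat) (u v w : 'M[nat]_n) :
    @is_vertex n r u -> @adj n u v -> @walk n r d v w -> @walk n r d.+1 u w.

Definition is_dist (n r : nat) (u v : 'M[nat]_n) (d : nat) : Prop :=
  @walk n r d u v /\ (forall k, @walk n r k u v -> (d <= k)%N).

Definition is_diameter (n r : nat) (D : nat) : Prop :=
  (forall u v : 'M[nat]_n, is_vertex r u -> is_vertex r v ->
     exists d, is_dist r u v d /\ (d <= D)%N) /\
  (exists u v : 'M[nat]_n, is_vertex r u /\ is_vertex r v /\ is_dist r u v D).

From mathcomp Require Import all_boot all_order all_algebra.
From mathcomp Require Import zify.
From Stdlib Require Import Classical.
Set Implicit Arguments. Unset Strict Implicit. Unset Printing Implicit Defensive.
Import GRing.Theory Num.Theory.

(* Given vertices u and v, we make the rows of u agree with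
   those of v one at a time, from top to bottom.  While row i of u has a
   positive surplus over row i of v (the sum of the truncated differences
   u i b - v i b), there are columns j, l with u i j > v i j and u i l < v i l,
   and the column-sum condition yields a lower row k > i with u k l > v k l;
   the basic move "transfer" shifting one unit from (i,j),(k,l) to (i,l),(k,j)
   is an edge of G(n,r), keeps the upper rows, and lowers the surplus by one.
   A row's surplus is at most r, and once the first n-1 rows agree the last
   one is forced by the column sums: so every distance is at most (n-1)r.

   The potential of a matrix (the sum of its entries on or
   below the diagonal) changes by at most 1 along an edge.  It equals nr on
   r I and r on r times the cyclic shift matrix, so these two vertices are at
   distance at least (n-1)r. *)

Lemma sum_deficit_surplus (I : finType) (F G : I -> nat) (x : I) :
  (\sum_i F i = \sum_i G i)%N -> (F x < G x)%N -> exists y, (G y < F y)%N.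
Proof.
move=> eqFG ltx; case: (pickP (fun y => G y < F y)%N) => [y|noSurplus].
  by exists y.
suff : (\sum_i F i < \sum_i G i)%N by rewrite eqFG ltnn.
rewrite (bigD1 x) //= [X in (_ < X)%N](bigD1 x) //= -addSn leq_add //.
by apply: leq_sum => y _; rewrite leqNgt noSurplus.
Qed.

Definition surplus (I : finType) (F G : I -> nat) : nat := (\sum_i (F i - G i))%N.

Lemma surplus0_eq (I : finType) (F G : I -> nat) :
  (\sum_i F i = \sum_i G i)%N -> surplus F G = 0%N -> F =1 G.
Proof.
move=> eqFG /eqP; rewrite /surplus sum_nat_eq0 => /forallP noExcess.
have leFG z : (F z <= G z)%N by rewrite -subn_eq0; apply: noExcess.
move=> y; apply/eqP; rewrite eqn_leq leFG leqNgt; apply/negP => lt_y.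
have [z ltz] := sum_deficit_surplus eqFG lt_y.
by move: (leFG z); rewrite leqNgt ltz.
Qed.

Lemma surplus_pos (I : finType) (F G : I -> nat) e :
  surplus F G = e.+1 -> exists y, (G y < F y)%N.
Proof.
rewrite /surplus; case: (pickP (fun y => G y < F y)%N) => [y|none].
  by exists y.
by rewrite big1 // => y _; apply/eqP; rewrite subn_eq0 leqNgt none.
Qed.

Section Walks.
Variables (n r : nat).

Lemma walk_cat d1 d2 (u v w : 'M[nat]_n) :
  walk r d1 u v -> walk r d2 v w -> walk r (d1 + d2) u w.
Proof.
elim=> [//|d x y z hx hxy _ IH] /IH hyw.
by rewrite addSn; apply: walkS hx hxy hyw.
Qed.

Lemma walk_end_vertex d (u v : 'M[nat]_n) : walk r d u v -> is_vertex r v.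
Proof. by elim. Qed.

Lemma walk_dist d (u v : 'M[nat]_n) :
  walk r d u v -> exists d', is_dist r u v d' /\ (d' <= d)%N.
Proof.
elim/ltn_ind: d => d IH hw.
case: (classic (exists2 k, (k < d)%N & walk r k u v)) => [[k ltkd hk]|noShorter].
  have [d' [hd' led']] := IH k ltkd hk.
  by exists d'; split => //; apply: leq_trans led' (ltnW ltkd).
exists d; split => //; split => // k hk; rewrite leqNgt; apply/negP => ltkd.
by apply: noShorter; exists k.
Qed.

End Walks.

Section BasicMoves.
Variable n : nat.
Local Open Scope ring_scope.

Lemma sum_mx_int_row (A : 'M[nat]_n) (a : 'I_n) :
  \sum_b mx_int A a b = (\sum_b A a b)%N%:Z.
Proof. by rewrite -natz natr_sum; apply: eq_bigr => b _; rewrite mxE natz. Qed.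

Lemma sum_mx_int_col (A : 'M[nat]_n) (b : 'I_n) :
  \sum_a mx_int A a b = (\sum_a A a b)%N%:Z.
Proof. by rewrite -natz natr_sum; apply: eq_bigr => a _; rewrite mxE natz. Qed.

Lemma sum_indicator_row (c : bool) (j : 'I_n) :
  \sum_(b < n) (c && (b == j))%:R = c%:R :> int.
Proof. by rewrite (bigD1 j) //= eqxx andbT big1 ?addr0 // => b /negbTE ->; rewrite andbF. Qed.

Lemma sum_indicator_col (c : bool) (i : 'I_n) :
  \sum_(a < n) ((a == i) && c)%:R = c%:R :> int.
Proof. under eq_bigr do rewrite andbC. exact: sum_indicator_row. Qed.

Lemma basic_move_row_sum (i j k l a : 'I_n) : \sum_b basic_move i j k l a b = 0.
Proof.
rewrite /basic_move; under eq_bigr do rewrite !mxE.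
by rewrite !sumrB big_split /= !sum_indicator_row addrAC addrK subrr.
Qed.

Lemma basic_move_col_sum (i j k l b : 'I_n) : \sum_a basic_move i j k l a b = 0.
Proof.
rewrite /basic_move; under eq_bigr do rewrite !mxE.
by rewrite !sumrB big_split /= !sum_indicator_col addrK subrr.
Qed.

Lemma basic_move_le (i j k l a b : 'I_n) : i != k -> j != l ->
  basic_move i j k l a b <= ((a == i) && (b == j) || (a == k) && (b == l))%:R.
Proof.
move=> ik jl; rewrite !mxE.
have rows : ~~ ((a == i) && (a == k)) by apply: contra ik => /andP[/eqP<- /eqP<-].
have cols : ~~ ((b == j) && (b == l)) by apply: contra jl => /andP[/eqP<- /eqP<-].
by move: rows cols; case: (a == i) (a == k) (b == j) (b == l) => [] [] [] [].
Qed.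

End BasicMoves.

Section Transfer.
Variables (n r : nat).

Definition transfer (u : 'M[nat]_n) (i j k l : 'I_n) : 'M[nat]_n :=
  \matrix_(a, b) `|(mx_int u - basic_move i j k l)%R a b|%N.

(* When u is positive at (i,j) and (k,l), no truncation occurs. *)
Lemma transfer_int (u : 'M[nat]_n) (i j k l : 'I_n) :
  i != k -> j != l -> (0 < u i j)%N -> (0 < u k l)%N ->
  mx_int (transfer u i j k l) = (mx_int u - basic_move i j k l)%R.
Proof.
move=> ik jl uij ukl; apply/matrixP => a b; rewrite [LHS]mxE mxE gez0_abs //.
have := basic_move_le a b ik jl; rewrite !mxE.
case: orP => [[/andP[/eqP-> /eqP->] | /andP[/eqP-> /eqP->]] | _] /=; lia.
Qed.

Lemma transfer_other_row (u : 'M[nat]_n) (i j k l a b : 'I_n) :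
  a != i -> a != k -> transfer u i j k l a b = u a b.
Proof. by move=> ai ak; rewrite !mxE (negbTE ai) (negbTE ak) /= addn0. Qed.

(* Since basic moves have zero line sums, a transfer stays a vertex ... *)
Lemma transfer_vertex (u : 'M[nat]_n) (i j k l : 'I_n) :
  is_vertex r u -> i != k -> j != l -> (0 < u i j)%N -> (0 < u k l)%N ->
  is_vertex r (transfer u i j k l).
Proof.
move=> [rows cols] ik jl uij ukl; have entries := transfer_int ik jl uij ukl.
split=> [a|b]; apply/eqP; rewrite -eqz_nat.
- rewrite -sum_mx_int_row entries; under eq_bigr do rewrite mxE [X in (_ + X)%R]mxE.
  by rewrite sumrB sum_mx_int_row rows basic_move_row_sum subr0.
- rewrite -sum_mx_int_col entries; under eq_bigr do rewrite mxE [X in (_ + X)%R]mxE.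
  by rewrite sumrB sum_mx_int_col cols basic_move_col_sum subr0.
Qed.

Lemma basic_move_swap_cols (i j k l : 'I_n) :
  basic_move i j k l = (- basic_move i l k j)%R.
Proof. by apply/matrixP => a b; rewrite !mxE; lia. Qed.

Lemma transfer_adj (u : 'M[nat]_n) (i j k l : 'I_n) :
  (i < k)%N -> j != l -> (0 < u i j)%N -> (0 < u k l)%N ->
  adj u (transfer u i j k l).
Proof.
move=> ik jl uij ukl; have ik' : i != k by rewrite neq_ltn ik.
rewrite /adj transfer_int // opprB addrC subrK.
case: (ltngtP j l) => [jl'|lj|/val_inj eq_jl]; last by rewrite eq_jl eqxx in jl.
- by exists i, k, j, l; do 2 split => //; left.
- by exists i, k, l, j; do 2 split => //; right; rewrite -basic_move_swap_cols.
Qed.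

(* In row i the transfer moves one unit from column j to column l; if row i
   of u exceeds row i of v at j and falls short at l, its surplus drops by 1. *)
Lemma transfer_surplus (u v : 'M[nat]_n) (i j k l : 'I_n) e :
  i != k -> j != l -> (v i j < u i j)%N -> (u i l < v i l)%N -> (0 < u k l)%N ->
  surplus (u i) (v i) = e.+1 -> surplus (transfer u i j k l i) (v i) = e.
Proof.
move=> ik jl ltj ltl ukl hs.
have entries := transfer_int ik jl (leq_ltn_trans (leq0n _) ltj) ukl.
have pt b : (transfer u i j k l i b - v i b + (b == j) = u i b - v i b)%N.
  move/matrixP: entries => /(_ i b); rewrite !mxE eqxx (negbTE ik) /=.
  have [->|bj] := eqVneq b j; first by rewrite (negbTE jl) /=; lia.
  by have [->|bl] := eqVneq b l => /=; lia.
have one_j : (\sum_b (b == j : nat) = 1)%N.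
  by rewrite (bigD1 j) //= eqxx big1 // => b /negbTE ->.
apply: succn_inj; rewrite -hs -addn1 -[X in (_ + X)%N = _]one_j /surplus.
by rewrite -big_split; apply: eq_bigr => b _; apply: pt.
Qed.

End Transfer.

Section UpperBound.
Variables (n r : nat).

Definition agree_below (m : nat) (u v : 'M[nat]_n) : Prop :=
  forall a b : 'I_n, (a < m)%N -> u a b = v a b.

Lemma transfer_step (u v : 'M[nat]_n) (i : 'I_n) e :
  is_vertex r u -> is_vertex r v -> agree_below i u v ->
  surplus (u i) (v i) = e.+1 ->
  exists w, [/\ adj u w, is_vertex r w, agree_below i w v & surplus (w i) (v i) = e].
Proof.
move=> [urows ucols] [vrows vcols] agree hs.
have [j ltj] := surplus_pos hs.
have [l ltl] : exists l, (u i l < v i l)%N.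
  by apply: (sum_deficit_surplus _ ltj); rewrite urows vrows.
have [k ltk] : exists k, (v k l < u k l)%N.
  by apply: (sum_deficit_surplus (F := fun a => u a l) _ ltl); rewrite ucols vcols.
have ik : (i < k)%N.
  case: (ltngtP i k) => [//|ki|/val_inj eq_ik]; last by move: ltk ltl; rewrite eq_ik; lia.
  by move: ltk; rewrite agree // ltnn.
have jl : j != l by apply/eqP => eq_jl; move: ltj ltl; rewrite eq_jl; lia.
have uij : (0 < u i j)%N by apply: leq_ltn_trans ltj.
have ukl : (0 < u k l)%N by apply: leq_ltn_trans ltk.
have ik' : i != k by rewrite neq_ltn ik.
exists (transfer u i j k l); split.
- exact: transfer_adj.
- exact: transfer_vertex.
- move=> a b lt_ai; rewrite transfer_other_row ?agree //.
  + by rewrite neq_ltn lt_ai.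
  + by rewrite neq_ltn (ltn_trans lt_ai ik).
- exact: transfer_surplus hs.
Qed.

Lemma fix_row (v : 'M[nat]_n) (i : 'I_n) e : forall u : 'M[nat]_n,
  is_vertex r u -> is_vertex r v -> agree_below i u v -> surplus (u i) (v i) = e ->
  exists w d, [/\ (d <= e)%N, walk r d u w & agree_below i.+1 w v].
Proof.
elim: e => [|e IH] u hu hv agree hs.
  exists u, 0%N; split => //; first exact: walk0.
  have row_i : u i =1 v i.
    by apply: surplus0_eq hs; rewrite hu.1 hv.1.
  move=> a b; rewrite ltnS leq_eqVlt => /orP [/eqP/val_inj-> | lt_ai].
  + exact: row_i.
  + exact: agree.
have [u' [huu' hu' agree' hs']] := transfer_step hu hv agree hs.
have [w [d [led walk_u'w agree_w]]] := IH u' hu' hv agree' hs'.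
by exists w, d.+1; split => //; apply: walkS hu huu' walk_u'w.
Qed.

(* Every row has surplus at most r, so the first m rows can be fixed in at
   most m r steps. *)
Lemma fix_rows (u v : 'M[nat]_n) m :
  is_vertex r u -> is_vertex r v -> (m < n)%N ->
  exists w d, [/\ (d <= m * r)%N, walk r d u w & agree_below m w v].
Proof.
move=> hu hv; elim: m => [|m IH] lt_mn.
  by exists u, 0%N; split => //; exact: walk0.
have lt_m : (m < n)%N := ltnW lt_mn.
have [w [d [led walk_uw agree_w]]] := IH lt_m.
have hw := walk_end_vertex walk_uw.
pose i := Ordinal lt_m.
have [w' [d' [led' walk_ww' agree_w']]] := fix_row (i := i) hw hv agree_w erefl.
exists w', (d + d')%N; split => //; last exact: walk_cat walk_uw walk_ww'.
have : (surplus (w i) (v i) <= r)%N.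
  by rewrite -(hw.1 i); apply: leq_sum => b _; apply: leq_subr.
by rewrite mulSn; lia.
Qed.

(* Once all rows but the last agree, the column sums force the last one. *)
Lemma agree_all_but_last (u v : 'M[nat]_n) :
  is_vertex r u -> is_vertex r v -> agree_below n.-1 u v -> u = v.
Proof.
move=> hu hv agree; apply/matrixP => a b.
case: (ltnP a n.-1) => [|last_a]; first exact: agree.
have sums := hu.2 b; rewrite -(hv.2 b) (bigD1 a) //= [in RHS](bigD1 a) //= in sums.
move: sums; rewrite (eq_bigr (fun a' => v a' b)) => [/addIn //|a' ne_a'a].
apply: agree; move: ne_a'a last_a (ltn_ord a) (ltn_ord a'); rewrite -val_eqE /=; lia.
Qed.

Lemma walk_upper_bound (u v : 'M[nat]_n) :
  (0 < n)%N -> is_vertex r u -> is_vertex r v ->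
  exists d, (d <= (n - 1) * r)%N /\ walk r d u v.
Proof.
move=> n_gt0 hu hv.
have last_lt : (n.-1 < n)%N by rewrite ltn_predL.
have [w [d [led walk_uw agree_w]]] := fix_rows hu hv last_lt.
exists d; rewrite subn1; split => //.
by rewrite -(agree_all_but_last (walk_end_vertex walk_uw) hv agree_w).
Qed.

End UpperBound.

Section Potential.
Variable n : nat.
Local Open Scope ring_scope.

Definition potential (M : 'M[int]_n) : int :=
  \sum_(a < n) \sum_(b < n | (b <= a)%N) M a b.

Lemma potentialD (A B : 'M[int]_n) : potential (A + B) = potential A + potential B.
Proof.
rewrite /potential -big_split; apply: eq_bigr => a _.
by rewrite -big_split; apply: eq_bigr => b _; rewrite mxE.
Qed.

Lemma potentialN (A : 'M[int]_n) : potential (- A) = - potential A.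
Proof.
rewrite /potential -sumrN; apply: eq_bigr => a _.
by rewrite -sumrN; apply: eq_bigr => b _; rewrite mxE.
Qed.

Lemma potentialB (A B : 'M[int]_n) : potential (A - B) = potential A - potential B.
Proof. by rewrite potentialD potentialN. Qed.

Lemma potential_delta (p q : 'I_n) : potential (delta_mx p q) = (q <= p)%N%:R.
Proof.
rewrite /potential (bigD1 p) //= [X in _ + X]big1 => [|a ne_ap]; last first.
  by apply: big1 => b _; rewrite mxE (negbTE ne_ap).
rewrite addr0 big_mkcond (bigD1 q) //= [X in _ + X]big1 => [|b ne_bq]; last first.
  by rewrite mxE (negbTE ne_bq) andbF; case: ifP.
by rewrite mxE !eqxx addr0; case: (q <= p)%N.
Qed.

Lemma potential_basic_move (i j k l : 'I_n) : (i < k)%N -> (j < l)%N ->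
  `|potential (basic_move i j k l)| <= 1.
Proof.
move=> ik jl; rewrite /basic_move !potentialB potentialD !potential_delta ler_norml.
by case: (leqP j i); case: (leqP l k); case: (leqP l i); case: (leqP j k) => /=; lia.
Qed.

Lemma adj_potential (u w : 'M[nat]_n) :
  adj u w -> potential (mx_int u) <= potential (mx_int w) + 1.
Proof.
move=> [i [k [j [l [ik [jl move_uw]]]]]].
have := potential_basic_move ik jl; rewrite ler_norml.
by case: move_uw => /(congr1 potential); rewrite potentialB ?potentialN; lia.
Qed.

Lemma walk_potential r d (u v : 'M[nat]_n) :
  walk r d u v -> potential (mx_int u) <= potential (mx_int v) + d%:Z.
Proof.
elim=> [x _|d' x y z _ /adj_potential hxy _ IH]; first by rewrite addr0.
lia.
Qed.

End Potential.

Section ExtremeVertices.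
Variables (n r : nat).

Definition diag_vertex : 'M[nat]_n := \matrix_(a, b) (if a == b then r else 0%N).

Definition shift_vertex : 'M[nat]_n := \matrix_(a, b) (if b == ordS a then r else 0%N).

Lemma sum_if_eq (c : 'I_n) (x : nat) : (\sum_b (if b == c then x else 0) = x)%N.
Proof. by rewrite -big_mkcond big_pred1_eq. Qed.

Lemma diag_is_vertex : is_vertex r diag_vertex.
Proof.
split=> [a|b]; under eq_bigr do rewrite mxE; last exact: sum_if_eq.
by under eq_bigr do rewrite eq_sym; apply: sum_if_eq.
Qed.

Lemma shift_is_vertex : is_vertex r shift_vertex.
Proof.
split=> [a|b]; under eq_bigr do rewrite mxE; first exact: sum_if_eq.
rewrite -[RHS](sum_if_eq b r) [RHS](reindex_inj (@ordS_inj n)).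
by apply: eq_bigr => a _; rewrite eq_sym.
Qed.

(* The whole diagonal of r I lies on or below the diagonal. *)
Lemma potential_diag : potential (mx_int diag_vertex) = Posz (n * r).
Proof.
rewrite /potential (eq_bigr (fun _ => Posz r)) => [|a _].
  by rewrite sumr_const card_ord; lia.
rewrite (bigD1 a) //= [X in (_ + X)%R]big1 => [|b /andP[_ ne_ba]].
  by rewrite !mxE eqxx addr0.
by rewrite !mxE eq_sym (negbTE ne_ba).
Qed.

End ExtremeVertices.

(* Only the last row of the shift matrix has its entry on or below the
   diagonal. *)
Lemma potential_shift (m r : nat) : potential (mx_int (shift_vertex m.+1 r)) = Posz r.
Proof.
have row (a : 'I_m.+1) : (\sum_(b < m.+1 | (b <= a)%N) mx_int (shift_vertex m.+1 r) a b
              = if (ordS a <= a)%N then Posz r else 0)%R.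
  rewrite big_mkcond (bigD1 (ordS a)) //= [X in (_ + X)%R]big1 => [|b ne_b].
    by rewrite !mxE eqxx addr0.
  by rewrite !mxE (negbTE ne_b); case: ifP.
rewrite /potential (eq_bigr _ (fun a _ => row a)) big_ord_recr /= big1 => [|a _].
  by rewrite modnn add0r.
by rewrite /= modn_small ?ltnS // ltnn.
Qed.

Lemma diag_shift_far (n r k : nat) : (0 < n)%N ->
  walk r k (diag_vertex n r) (shift_vertex n r) -> ((n - 1) * r <= k)%N.
Proof.
case: n => [//|m] _ /walk_potential.
by rewrite potential_diag potential_shift subn1 /= mulSn; lia.
Qed.

Theorem proposition2p10 (n r : nat) (hn : (1 <= n)%N) (hr : (1 <= r)%N) :
  is_diameter n r ((n - 1) * r)%N.
Proof.
split.
- move=> u v hu hv; have [d [led walk_uv]] := walk_upper_bound hn hu hv.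
  have [d' [dist_uv led']] := walk_dist walk_uv.
  by exists d'; split => //; apply: leq_trans led' led.
- have [hdiag hshift] := (diag_is_vertex n r, shift_is_vertex n r).
  have far k := @diag_shift_far n r k hn.
  exists (diag_vertex n r), (shift_vertex n r); do 2 split => //.
  have [d [led walk_d]] := walk_upper_bound hn hdiag hshift.
  have eq_d : d = ((n - 1) * r)%N by apply/eqP; rewrite eqn_leq led far.
  by rewrite -eq_d; split => // k /far; rewrite eq_d.
Qed.
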